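(* Let $q=p^s$ with $p$ prime, $R_T=\mathbb{F}_q[T]$, $P\in R_T$ monic irreducible of degree $d$, and $n,\alpha\in\mathbb{N}$ with $n\ge1$. Let $v_n(\alpha)$ be the number of distinct cyclic subgroups of order $p^n$ of the group $(R_T/(P^{\alpha}))^{\ast}$. Then \[ v_n(\alpha)=\frac{q^{d\left(\alpha-\lceil \alpha/p^n\rceil\right)}-q^{d\left(\alpha-\lceil\alpha/p^{n-1}\rceil\right)}}{p^{n-1}(p-1)} =\frac{q^{d\left(\alpha-\lceil\alpha/p^{n-1}\rceil\right)}\left(q^{d\left(\lceil\alpha/p^{n-1}\rceil-\lceil\alpha/p^{n}\rceil\right)}-1\right)}{p^{n-1}(p-1)}, \] where $\lceil x\rceil$ is the least integer $\geq x$. *)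

From HB Require Import structures.
From mathcomp Require Import all_boot all_order all_algebra.
Set Implicit Arguments. Unset Strict Implicit. Unset Printing Implicit Defensive.
Import GRing.Theory.
Local Open Scope ring_scope.

(* The quotient ring R_T/(M) (M = P^alpha) is modelled as the
   finite type of residues, i.e. polynomials of size < size M, with
   multiplication modulo M. *)
Section QuotientUnits.
Variable F : finFieldType.

Definition residues (M : {poly F}) := {poly_((size M).-1) F}.

Definition qunit (M : {poly F}) (x : residues M) : bool :=
  [exists y : residues M, ((val x * val y) %% M == 1 %% M)].

(* the cyclic subgroup <x> = { x^k mod M : k >= 0 } (k <= #|R_T/(M)| suffices) *)
Definition qcyc (M : {poly F}) (x : residues M) : {set residues M} :=
  [set y : residues M | [exists k : 'I_(#|residues M|.+1),
                          val y == (val x ^+ k) %% M]].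

Definition num_cyclic_subgroups (M : {poly F}) (m : nat) : nat :=
  #|[set qcyc x | x : residues M & qunit x && (#|qcyc x| == m)%N]|.
End QuotientUnits.

Definition cdiv (a m : nat) : nat := ((a + m.-1) %/ m)%N.

(* The group (R_T/(P^alpha))^* is finite, so counting its cyclic subgroups of
   order p^n amounts to counting its elements of order p^n, which are those
   killed by p^n but not by p^(n-1); each subgroup has totient(p^n) generators.
   In characteristic p, u ^+ p^k = 1 iff (u - 1) ^+ p^k = 0, and since P is
   irreducible this holds iff P ^+ ceil(alpha / p^k) divides u - 1; such
   residues are counted by the degree of the cofactor, giving
   q ^ (d (alpha - ceil(alpha / p^k))). *)
From mathcomp Require Import all_boot all_algebra all_fingroup all_solvable all_field.
From mathcomp Require Import zify.
Set Implicit Arguments.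
Unset Strict Implicit.
Unset Printing Implicit Defensive.
Import GRing.Theory Num.Theory.
Local Open Scope ring_scope.

Lemma leq_cdivLR (a m v : nat) : (0 < m)%N -> (cdiv a m <= v)%N = (a <= v * m)%N.
Proof. by move=> m_gt0; rewrite /cdiv -ltnS ltn_divLR //; lia. Qed.

Lemma leq_cdiv (a m : nat) : (0 < m)%N -> (cdiv a m <= a)%N.
Proof. by move=> m_gt0; rewrite leq_cdivLR // leq_pmulr. Qed.

Lemma leq_cdiv2l (a m m' : nat) :
  (0 < m')%N -> (m' <= m)%N -> (cdiv a m <= cdiv a m')%N.
Proof.
move=> m'_gt0 le_m'm; rewrite leq_cdivLR ?(leq_trans m'_gt0 le_m'm) //.
have := leqnn (cdiv a m'); rewrite leq_cdivLR // => /leq_trans-> //.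
by rewrite leq_mul2l le_m'm orbT.
Qed.

Section IrreduciblePowers.
Variable F : fieldType.
Variable P : {poly F}.
Hypothesis P_irr : irreducible_poly P.

Lemma irr_neq0 : P != 0.
Proof. by case: P_irr => P_gt1 _; rewrite -size_poly_gt0 ltnW. Qed.

Lemma dvdp_exp_mul_ndvd (b v : nat) (w : {poly F}) :
  ~~ (P %| w) -> (P ^+ b %| P ^+ v * w) = (b <= v)%N.
Proof.
move=> nPw; case: (leqP b v) => [le_bv | lt_vb].
  by rewrite dvdp_mulr // dvdp_exp2l.
apply/negP => dvd_b; apply: (negP nPw).
have: P ^+ v * P ^+ (b - v) %| P ^+ v * w by rewrite -exprD subnKC // ltnW.
rewrite dvdp_mul2l ?expf_neq0 ?irr_neq0 //; apply: dvdp_trans.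
by rewrite -(subnSK lt_vb) exprS dvdp_mulr.
Qed.

Lemma exists_pfactor_split (y : {poly F}) :
  y != 0 -> exists v z, y = P ^+ v * z /\ ~~ (P %| z).
Proof.
have [k] := ubnP (size y); elim: k y => // k IHk y size_y y_neq0.
have [Py|nPy] := boolP (P %| y); last by exists 0%N, y; rewrite expr0 mul1r.
have yE := divpK Py.
have q_neq0 : y %/ P != 0 by apply: contra y_neq0 => /eqP q0; rewrite -yE q0 mul0r.
have [|v [z [qE nPz]]] := IHk (y %/ P) _ q_neq0.
  rewrite -ltnS (leq_trans _ size_y) // ltnS -{2}yE size_mul ?irr_neq0 //.
  by case: P_irr; case: (size P) => // [[]] //= m _ _; rewrite !addnS ltnS leq_addr.
by exists v.+1, z; rewrite -yE qE exprS mulrC mulrA.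
Qed.

(* The P-adic valuation of y ^+ m is m times that of y. *)
Lemma dvdp_exp_pow (a m : nat) (y : {poly F}) :
  (0 < m)%N -> (P ^+ a %| y ^+ m) = (P ^+ cdiv a m %| y).
Proof.
move=> m_gt0; have [->|y_neq0] := eqVneq y 0.
  by rewrite expr0n gtn_eqF // !dvdp0.
have [v [z [-> nPz]]] := exists_pfactor_split y_neq0.
have nPzm : ~~ (P %| z ^+ m).
  by rewrite -irreducible_poly_coprime // coprimep_pexpr // irreducible_poly_coprime.
by rewrite exprMn -exprM !dvdp_exp_mul_ndvd // leq_cdivLR // mulnC.
Qed.

End IrreduciblePowers.

Lemma card_order_eq (gT : finGroupType) (m : nat) :
  #|[set x : gT | #[x]%g == m]|
    = (#|[set <[x]>%g | x : gT & #[x]%g == m]| * totient m)%N.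
Proof.
set G_m := [set x : gT | #[x]%g == m].
have -> : [set <[x]>%g | x : gT & #[x]%g == m] = [set <[x]>%g | x in G_m].
  by apply/setP => C; apply/imsetP/imsetP => -[x x_m ->]; exists x; rewrite ?inE in x_m *.
rewrite -sum1_card (partition_big_imset (@cycle gT)) /= -sum_nat_const.
apply: eq_bigr => C /imsetP[x]; rewrite inE => /eqP x_m ->.
rewrite sum1dep_card -x_m totient_gen; apply: eq_card => y; rewrite !inE /generator.
apply/andP/eqP => [[_ /eqP ->] // | xy]; split; last by rewrite xy.
by rewrite -x_m /order xy.
Qed.

Lemma card_order_pexp (gT : finGroupType) (p n : nat) : prime p -> (0 < n)%N ->
  #|[set x : gT | #[x]%g == (p ^ n)%N]|
    = (#|[set x : gT | (x ^+ (p ^ n) == 1)%g]|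
       - #|[set x : gT | (x ^+ (p ^ n.-1) == 1)%g]|)%N.
Proof.
move=> p_pr n_gt0; have p_gt1 := prime_gt1 p_pr.
set A := [set x : gT | _ == 1]%g; set B := [set x : gT | _ == 1]%g.
have subBA : B \subset A.
  apply/subsetP => x; rewrite !inE -!order_dvdn => /dvdn_trans-> //.
  by rewrite dvdn_exp2l // leq_pred.
suff -> : [set x : gT | #[x]%g == (p ^ n)%N] = A :\: B.
  by rewrite cardsD (setIidPr subBA).
apply/setP => x; rewrite !inE -!order_dvdn; apply/eqP/andP => [-> | [nBx Ax]].
  split=> //; apply/negP => /dvdn_leq; rewrite expn_gt0 prime_gt0 // => /(_ isT).
  by rewrite leq_exp2l // -ltnS prednK // ltnn.
move: nBx; have [j le_jn ->] := dvdn_pfactor _ _ p_pr Ax.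
case: (ltnP j n) => [lt_jn | le_nj]; first by rewrite dvdn_exp2l // -ltnS prednK.
by move=> _; congr (_ ^ _)%N; apply/eqP; rewrite eqn_leq le_jn.
Qed.

Lemma card_unit_roots1 (R : finUnitRingType) (N : nat) : (0 < N)%N ->
  #|[set u : {unit R} | (u ^+ N == 1)%g]| = #|[set a : R | a ^+ N == 1]|.
Proof.
move=> N_gt0; rewrite -(card_imset _ val_inj); apply: eq_card => a.
apply/imsetP/idP => [[u]|]; rewrite !inE.
  by move=> /eqP uN1 ->; rewrite -FinRing.val_unitX uN1.
move=> /eqP aN1; have Ua : a \is a GRing.unit.
  by apply/unitrP; exists (a ^+ N.-1); rewrite -exprS -exprSr prednK.
exists (FinRing.unit _ Ua) => //; rewrite inE; apply/eqP/val_inj.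
by rewrite FinRing.val_unitX /= aN1.
Qed.

(* Frobenius: (z + 1) ^+ N = z ^+ N + 1, so a |-> a - 1 is the bijection. *)
Lemma card_roots1_nilpotent (R : finComNzRingType) (N : nat) : [pchar R].-nat N ->
  #|[set a : R | a ^+ N == 1]| = #|[set z : R | z ^+ N == 0]|.
Proof.
move=> charN; rewrite -[RHS](card_imset _ (addIr 1)); apply: eq_card => a.
apply/idP/imsetP; rewrite ?inE; last first.
  by case=> z; rewrite !inE => /eqP zN0 ->; rewrite exprDn_pchar // zN0 expr1n add0r.
move=> /eqP aN1; exists (a - 1); last by rewrite subrK.
rewrite inE; apply/eqP/(addIr 1).
by rewrite add0r -{2}(expr1n _ N) -exprDn_pchar // subrK aN1.
Qed.

(* [residues M] and [{poly %/ M}] hold the same polynomials, but only the latter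
   carries the ring structure (they are not convertible: [mk_monic M] is only
   provably equal to [M]). *)
Section Residues.
Variable F : finFieldType.
Variable M : {poly F}.
Hypothesis M_monic : M \is monic.
Hypothesis M_gt1 : (1 < size M)%N.
Local Notation Q := {poly %/ M}.
Local Notation R := (residues M).

Lemma mk_monicE : mk_monic M = M.
Proof. by rewrite /mk_monic M_gt1 M_monic. Qed.

Lemma qpoly_valM (a b : Q) : val (a * b) = (val a * val b) %% M.
Proof.
have := poly_of_qpolyM a b; rewrite [X in Pdiv.CommonRing.rmodp _ X]mk_monicE => vE.
by rewrite (Pdiv.IdomainMonic.modpE M_monic) -vE.
Qed.

Lemma qpoly_valX (a : Q) (k : nat) : val (a ^+ k) = (val a ^+ k) %% M.
Proof.
have := poly_of_qpolyX a k; rewrite [X in Pdiv.CommonRing.rmodp _ X]mk_monicE => vE.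
by rewrite (Pdiv.IdomainMonic.modpE M_monic) -vE.
Qed.

Lemma size_qpoly (a : Q) : (size (val a) < size M)%N.
Proof. by rewrite -[in X in (_ < X)%N]mk_monicE size_mk_monic. Qed.

Lemma size_residue (x : R) : (size (val x) < size M)%N.
Proof.
by case: x => x /=; rewrite qualifE /= => /leq_ltn_trans->; rewrite // prednK // ltnW.
Qed.

Definition qpoly_of_res (x : R) : Q := in_qpoly M (val x).

Lemma val_qpoly_of_res (x : R) : val (qpoly_of_res x) = val x.
Proof. by apply: in_qpoly_small; rewrite mk_monicE size_residue. Qed.

Lemma res_of_qpoly_subproof (a : Q) : val a \is a poly_of_size (size M).-1.
Proof. by rewrite qualifE /= -ltnS prednK ?size_qpoly // ltnW. Qed.

Definition res_of_qpoly (a : Q) : R := NPoly (res_of_qpoly_subproof a).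

Lemma val_res_of_qpoly (a : Q) : val (res_of_qpoly a) = val a.
Proof. by []. Qed.

Lemma res_of_qpolyK : cancel res_of_qpoly qpoly_of_res.
Proof. by move=> a; apply: val_inj; rewrite val_qpoly_of_res. Qed.

Lemma qpoly_of_resK : cancel qpoly_of_res res_of_qpoly.
Proof. by move=> x; apply: val_inj; rewrite val_res_of_qpoly val_qpoly_of_res. Qed.

Lemma qunitE (x : R) : qunit x = (qpoly_of_res x \is a GRing.unit).
Proof.
have mod1 : (1 : {poly F}) %% M = 1 by rewrite modp_small // size_polyC oner_eq0.
apply/existsP/unitrPr => [[y /eqP xy1] | [b /(congr1 val)]].
  by exists (qpoly_of_res y); apply: val_inj; rewrite qpoly_valM !val_qpoly_of_res xy1 mod1.
rewrite qpoly_valM val_qpoly_of_res => xb1.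
by exists (res_of_qpoly b); rewrite val_res_of_qpoly xb1 mod1.
Qed.

Definition res_of_unit (u : {unit Q}) : R := res_of_qpoly (val u).

Lemma res_of_unit_inj : injective res_of_unit.
Proof. by move=> u v /(congr1 qpoly_of_res); rewrite !res_of_qpolyK => /val_inj. Qed.

Lemma qcyc_res_of_unit (u : {unit Q}) :
  qcyc (res_of_unit u) = [set res_of_unit x | x in <[u]>%g].
Proof.
apply/setP => y; rewrite inE; apply/existsP/imsetP => [[k /eqP yE] | [x /cycleP[i ->] ->]].
  exists (u ^+ k)%g; first by rewrite mem_cycle.
  by apply: val_inj; rewrite yE /res_of_unit !val_res_of_qpoly FinRing.val_unitX qpoly_valX.
have lt_i_card : (i %% #[u]%g < #|R|.+1)%N.
  rewrite ltnS (leq_trans (ltnW (ltn_pmod _ (order_gt0 u)))) //.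
  rewrite (leq_trans (max_card (mem <[u]>%g))) // (leq_trans (leq_card _ val_inj)) //.
  exact: leq_card _ (can_inj res_of_qpolyK).
exists (Ordinal lt_i_card) => /=.
by rewrite -expg_mod_order FinRing.val_unitX qpoly_valX.
Qed.

Lemma card_qcyc_res_of_unit (u : {unit Q}) : #|qcyc (res_of_unit u)| = #[u]%g.
Proof. by rewrite qcyc_res_of_unit (card_imset _ res_of_unit_inj). Qed.

Lemma num_cyclic_subgroupsE (m : nat) :
  num_cyclic_subgroups M m = #|[set <[u]>%g | u : {unit Q} & #[u]%g == m]|.
Proof.
rewrite /num_cyclic_subgroups -(card_imset _ (imset_inj res_of_unit_inj)).
apply: eq_card => Y; apply/imsetP/imsetP => [[x] | [_ /imsetP[u] + -> ->]].
  rewrite inE qunitE => /andP[Ux /eqP card_x] ->.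
  pose u : {unit Q} := FinRing.unit _ Ux.
  have xE : x = res_of_unit u by apply: (can_inj qpoly_of_resK); rewrite res_of_qpolyK.
  exists <[u]>%g; last by rewrite xE qcyc_res_of_unit.
  by apply/imsetP; exists u; rewrite // inE -card_qcyc_res_of_unit -xE card_x.
rewrite inE => /eqP ord_u; exists (res_of_unit u); last by rewrite qcyc_res_of_unit.
by rewrite inE qunitE res_of_qpolyK (valP u) card_qcyc_res_of_unit ord_u eqxx.
Qed.

End Residues.

Lemma num_cyclic_subgroups1 (F : finFieldType) (m : nat) :
  (1 < m)%N -> num_cyclic_subgroups (1 : {poly F}) m = 0%N.
Proof.
move=> m_gt1; apply/eqP; rewrite cards_eq0; apply/eqP/setP => Y; rewrite inE.
apply/imsetP => -[x]; rewrite inE => /andP[_ /eqP card_x] _.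
have : (#|qcyc x| <= 1)%N.
  by rewrite (leq_trans (max_card _)) // card_npoly size_poly1 expn0.
by rewrite card_x leqNgt m_gt1.
Qed.

Section PrimePowerModulus.
Variable F : finFieldType.
Variable P : {poly F}.
Variables d alpha : nat.
Hypothesis P_monic : P \is monic.
Hypothesis size_P : size P = d.+1.
Hypothesis d_gt0 : (0 < d)%N.
Hypothesis alpha_gt0 : (0 < alpha)%N.
Local Notation M := (P ^+ alpha).

Lemma size_Pexp (k : nat) : size (P ^+ k) = (d * k).+1.
Proof.
have P_neq0 : P != 0 by rewrite -size_poly_gt0 size_P.
have := size_exp P k; rewrite size_P /= => <-.
by rewrite prednK // size_poly_gt0 expf_neq0.
Qed.

Lemma size_Pexp_gt1 : (1 < size M)%N.
Proof. by rewrite size_Pexp ltnS muln_gt0 d_gt0 alpha_gt0. Qed.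

(* The multiples of P ^+ c in R_T/(P ^+ alpha) are P ^+ c * w with deg w < d (alpha - c). *)
Lemma card_qpoly_dvdp_exp (c : nat) : (c <= alpha)%N ->
  #|[set z : {poly %/ M} | P ^+ c %| val z]| = (#|F| ^ (d * (alpha - c)))%N.
Proof.
move=> le_c_alpha; set k := (d * (alpha - c))%N.
have Pc_neq0 : P ^+ c != 0 by rewrite -size_poly_gt0 size_Pexp.
have M_monic : M \is monic := monic_exp _ P_monic.
have size_Pc_mul (w : {poly_k F}) : (size (P ^+ c * val w)%R < size M)%N.
  have [->|w_neq0] := eqVneq (val w) 0; first by rewrite mulr0 size_poly0 size_Pexp.
  rewrite size_mul // !size_Pexp ltnS (leq_trans (leq_add (leqnn _) (valP w))) //.
  by rewrite -mulnDr subnKC.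
pose h (w : {poly_k F}) : {poly %/ M} := in_qpoly M (P ^+ c * val w).
have val_h w : val (h w) = P ^+ c * val w.
  by apply: in_qpoly_small; rewrite (mk_monicE M_monic size_Pexp_gt1) size_Pc_mul.
have h_inj : injective h.
  by move=> w1 w2 /(congr1 val); rewrite !val_h => /(mulfI Pc_neq0)/val_inj.
rewrite -card_npoly -(card_imset _ h_inj); apply: eq_card => z; rewrite inE.
apply/idP/imsetP => [Pc_z | [w _ ->]]; last by rewrite val_h dvdp_mulr.
have zE : val z %/ P ^+ c * P ^+ c = val z by rewrite divpK.
suff size_q : val z %/ P ^+ c \is a poly_of_size k.
  by exists (NPoly size_q) => //; apply: val_inj; rewrite val_h /= mulrC zE.
rewrite qualifE /=; have [->|q_neq0] := eqVneq (val z %/ P ^+ c) 0; first by rewrite size_poly0.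
have := size_qpoly M_monic size_Pexp_gt1 z.
rewrite -zE size_mul // !size_Pexp addnS ltnS /k mulnBr => lt_size.
by rewrite leq_subRL ?leq_mul2l ?le_c_alpha ?orbT // addnC.
Qed.

End PrimePowerModulus.

Lemma card_unit_pexp_roots1 (F : finFieldType) (p s : nat) (P : {poly F})
    (d alpha k : nat) :
  prime p -> #|F| = (p ^ s)%N -> P \is monic -> irreducible_poly P ->
  size P = d.+1 -> (0 < alpha)%N ->
  #|[set u : {unit {poly %/ P ^+ alpha}} | (u ^+ (p ^ k) == 1)%g]|
    = (#|F| ^ (d * (alpha - cdiv alpha (p ^ k))))%N.
Proof.
move=> p_pr card_F P_monic P_irr size_P alpha_gt0.
have d_gt0 : (0 < d)%N by case: P_irr; rewrite size_P.
have pk_gt0 : (0 < p ^ k)%N by rewrite expn_gt0 prime_gt0.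
have M_monic : P ^+ alpha \is monic := monic_exp _ P_monic.
have M_gt1 := size_Pexp_gt1 size_P d_gt0 alpha_gt0.
have char_pk : [pchar {poly %/ P ^+ alpha}].-nat (p ^ k)%N.
  by rewrite pnatX (pnatE _ p_pr) pchar_qpoly (card_finPcharP card_F p_pr).
rewrite card_unit_roots1 // card_roots1_nilpotent //.
rewrite -(card_qpoly_dvdp_exp P_monic size_P d_gt0 alpha_gt0 (leq_cdiv _ pk_gt0)).
by apply: eq_card => z; rewrite !inE -val_eqE qpoly_valX // -dvdp_exp_pow.
Qed.

Lemma num_cyclic_subgroups_mul_totient (F : finFieldType) (p s : nat)
    (P : {poly F}) (d n alpha : nat) :
  prime p -> #|F| = (p ^ s)%N -> P \is monic -> irreducible_poly P ->
  size P = d.+1 -> (0 < n)%N ->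
  (num_cyclic_subgroups (P ^+ alpha) (p ^ n) * totient (p ^ n))%N
    = (#|F| ^ (d * (alpha - cdiv alpha (p ^ n)))
       - #|F| ^ (d * (alpha - cdiv alpha (p ^ n.-1))))%N.
Proof.
move=> p_pr card_F P_monic P_irr size_P n_gt0.
have [-> | alpha_gt0] := posnP alpha.
  rewrite expr0 num_cyclic_subgroups1 ?mul0n ?sub0n ?subnn //.
  by rewrite -{1}(expn0 p) ltn_exp2l ?prime_gt1.
have d_gt0 : (0 < d)%N by case: P_irr; rewrite size_P.
have M_monic : P ^+ alpha \is monic := monic_exp _ P_monic.
have M_gt1 := size_Pexp_gt1 size_P d_gt0 alpha_gt0.
rewrite num_cyclic_subgroupsE // -card_order_eq card_order_pexp //.
by rewrite !(card_unit_pexp_roots1 _ p_pr card_F P_monic P_irr size_P alpha_gt0).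
Qed.

Theorem proposition5p1 (F : finFieldType) (p s : nat) (P : {poly F})
    (d n alpha : nat) :
  prime p -> #|F| = (p ^ s)%N ->
  P \is monic -> irreducible_poly P -> size P = d.+1 -> (1 <= n)%N ->
  (num_cyclic_subgroups (P ^+ alpha) (p ^ n))%:R
    = ((#|F| ^ (d * (alpha - cdiv alpha (p ^ n))))%:R
       - (#|F| ^ (d * (alpha - cdiv alpha (p ^ n.-1))))%:R)
      / ((p ^ n.-1 * (p - 1))%:R) :> rat
  /\
  (num_cyclic_subgroups (P ^+ alpha) (p ^ n))%:R
    = (#|F| ^ (d * (alpha - cdiv alpha (p ^ n.-1))))%:R
      * ((#|F| ^ (d * (cdiv alpha (p ^ n.-1) - cdiv alpha (p ^ n))))%:R - 1)
      / ((p ^ n.-1 * (p - 1))%:R) :> rat.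
Proof.
move=> p_pr card_F P_monic P_irr size_P n_gt0.
have key := num_cyclic_subgroups_mul_totient alpha p_pr card_F P_monic P_irr size_P n_gt0.
set N := num_cyclic_subgroups _ _ in key *.
set c1 := cdiv alpha (p ^ n) in key *; set c0 := cdiv alpha (p ^ n.-1) in key *.
rewrite totient_pfactor // -[p.-1]subn1 [((p - 1) * _)%N]mulnC in key.
have p_gt0 := prime_gt0 p_pr.
have le_c1_c0 : (c1 <= c0)%N by rewrite leq_cdiv2l ?expn_gt0 ?p_gt0 ?leq_pexp2l ?leq_pred.
have le_c0_alpha : (c0 <= alpha)%N by rewrite leq_cdiv ?expn_gt0 ?p_gt0.
have le_pow : (#|F| ^ (d * (alpha - c0)) <= #|F| ^ (d * (alpha - c1)))%N.
  by rewrite leq_pexp2l ?card_F ?expn_gt0 ?p_gt0 // leq_mul2l leq_sub2l ?orbT.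
have D_neq0 : (p ^ n.-1 * (p - 1))%:R != 0 :> rat.
  by rewrite pnatr_eq0 -lt0n muln_gt0 expn_gt0 p_gt0 subn_gt0 prime_gt1.
have NE : N%:R = (N * (p ^ n.-1 * (p - 1)))%:R / (p ^ n.-1 * (p - 1))%:R :> rat.
  by rewrite natrM mulfK.
split; rewrite NE key natrB //.
have -> : (d * (alpha - c1) = d * (alpha - c0) + d * (c0 - c1))%N.
  by rewrite -mulnDr; congr (d * _)%N; lia.
by rewrite expnD natrM mulrBr mulr1.
Qed.
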